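(* Let $r>0$, $V_T>0$ and $R_0\ge r$. Define $$f(t,V_s)=1+\frac{1}{2R_0(R_0+r)}\left(r^2-V_T^2\left(\frac{2\pi R_0}{V_s}+t\right)^2\right)-\cos\!\left(\frac{V_s t}{R_0}\right)$$ and $$V_c=\frac{\left(2\pi+\arcsin\frac{r}{R_0}\right)R_0V_T}{r}.$$ Then the minimum of $t\mapsto f(t,V_c)$ over $0\le t\le \frac{\pi R_0}{2V_c}$ is strictly positive, that is, $f(t^*,V_c)>0$ at the minimizer $t^*$. In particular $f(t,V_c)\ge 0$ for all $t\in\left[0,\frac{\pi R_0}{2V_c}\right]$.
   Context: $R_0$ is the initial radius of the disk containing the evaders, $2r$ is the length of the sweeper's line sensor, $V_T$ is the maximal evader speed, and $V_c$ is a candidate sweeper speed. The condition $f(t,V_s)\ge 0$ for $0\le t\le \pi R_0/(2V_s)$ is the paper's criterion for the sweeper to be fast enough to accomplish the confinement task. *)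

From Stdlib Require Import Reals.
Open Scope R_scope.

Definition fsweep (r VT R0 t Vs : R) : R :=
  1 + (r ^ 2 - VT ^ 2 * (2 * PI * R0 / Vs + t) ^ 2) / (2 * R0 * (R0 + r))
    - cos (Vs * t / R0).

Definition Vc (r VT R0 : R) : R := (2 * PI + asin (r / R0)) * R0 * VT / r.

(* Substitute s = V_c t / R0, so that s ranges over [0, pi/2].  With a = arcsin (r/R0),
   the choice of V_c gives V_T R0 / V_c = r / (2 pi + a), hence
   f(t, V_c) = 1 - cos s - E(s) with E(s) = r^2 (((2 pi + s)/(2 pi + a))^2 - 1) / (2 R0 (R0 + r)).
   For s <= a the term E(s) is nonpositive.  For s > a we have r < a R0 < s R0 and
   (2 pi + s)/(2 pi + a) <= 5/4, so E(s) <= 9/32 s^2 < s^2/3 <= 1 - cos s.  At s = 0,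
   E(0) < 0.  So f(., V_c) is positive on the whole interval, and its minimum, which
   exists by continuity, is positive. *)

From Stdlib Require Import Reals Lra.
Open Scope R_scope.

Lemma Rdiv_le_of_le_mul (a b c : R) : 0 < b -> a <= c * b -> a / b <= c.
Proof.
  intros Hb Hab.
  replace c with (c * b / b) by (field; lra).
  apply Rmult_le_compat_r; [| exact Hab].
  left; now apply Rinv_0_lt_compat.
Qed.

Lemma one_sub_cos_ge (s : R) : -(PI / 2) <= s <= PI / 2 -> s ^ 2 / 3 <= 1 - cos s.
Proof.
  intros Hs.
  pose proof PI_4.
  destruct (cos_bound s 0) as [_ Hcos]; [lra | lra |].
  replace (cos_approx s (2 * (0 + 1))) with (1 - s ^ 2 / 2 + s ^ 4 / 24) in Hcos
    by (unfold cos_approx, cos_term; simpl; field).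
  assert (Hs2 : s ^ 2 <= 4) by nra.
  nra.
Qed.

Lemma asin_gt_id (x : R) : 0 < x <= 1 -> x < asin x.
Proof.
  intros Hx.
  assert (Hsin : sin (asin x) = x) by (apply sin_asin; lra).
  pose proof (asin_bound x) as Hb.
  pose proof PI_RGT_0.
  assert (Hpos : 0 < asin x).
  { destruct (Rlt_or_le 0 (asin x)) as [Hlt | Hle]; [exact Hlt |].
    assert (Hneg : 0 <= sin (- asin x)) by (apply sin_ge_0; lra).
    rewrite sin_neg, Hsin in Hneg; lra. }
  rewrite <- Hsin at 1. now apply sin_lt_x.
Qed.

Lemma lt_asin_div_mul (r R0 : R) : 0 < r <= R0 -> r < asin (r / R0) * R0.
Proof.
  intros Hr.
  assert (Hk : 0 < r / R0 <= 1).
  { split; [apply Rdiv_lt_0_compat | apply Rdiv_le_of_le_mul]; lra. }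
  pose proof (asin_gt_id (r / R0) Hk) as Ha.
  apply Rmult_lt_compat_r with (r := R0) in Ha; [| lra].
  replace (r / R0 * R0) with r in Ha by (field; lra).
  exact Ha.
Qed.

Lemma continuous_pos_attains_pos_min (f : R -> R) (a b : R) :
  a <= b ->
  (forall t, a <= t <= b -> continuity_pt f t) ->
  (forall t, a <= t <= b -> 0 < f t) ->
  exists tstar, a <= tstar <= b /\
    (forall t, a <= t <= b -> f tstar <= f t) /\ 0 < f tstar.
Proof.
  intros Hab Hcont Hpos.
  destruct (continuity_ab_min f a b Hab Hcont) as [m [Hmin Hm]].
  exists m. auto.
Qed.

(* E(s) of the header: ((V_T (2 pi R0 / V_c + t))^2 - r^2) / (2 R0 (R0 + r)) written in s. *)
Definition evader_excess (r R0 a s : R) : R :=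
  r ^ 2 * (((2 * PI + s) / (2 * PI + a)) ^ 2 - 1) / (2 * R0 * (R0 + r)).

Section Margin.

Variables r R0 a : R.
Hypothesis hr : 0 < r.
Hypothesis hR0 : r <= R0.
Hypothesis ha : 0 < a.
Hypothesis hra : r < a * R0.

Lemma evader_excess_0_neg : evader_excess r R0 a 0 < 0.
Proof.
  pose proof PI_RGT_0.
  unfold evader_excess.
  rewrite Rplus_0_r.
  set (x := 2 * PI / (2 * PI + a)).
  assert (Hx : x * (2 * PI + a) = 2 * PI) by (unfold x; field; lra).
  assert (0 < x < 1) by nra.
  apply Rdiv_neg_pos; [| nra].
  apply Rmult_pos_neg; nra.
Qed.

Lemma evader_excess_le (s : R) :
  0 <= s <= PI / 2 -> evader_excess r R0 a s <= 9 / 32 * s ^ 2.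
Proof.
  intros Hs.
  pose proof PI_RGT_0.
  pose proof PI2_3_2.
  assert (HD : 0 < 2 * R0 * (R0 + r)) by nra.
  set (x := (2 * PI + s) / (2 * PI + a)).
  assert (Hx : x * (2 * PI + a) = 2 * PI + s) by (unfold x; field; lra).
  unfold evader_excess; fold x.
  apply Rdiv_le_of_le_mul; [exact HD |].
  destruct (Rle_or_lt s a) as [Hsa | Hsa].
  - assert (x <= 1) by nra.
    assert (0 < x) by nra.
    assert (x ^ 2 <= 1) by nra.
    assert (0 < r ^ 2) by (apply pow_lt; lra).
    assert (r ^ 2 * (x ^ 2 - 1) <= 0) by nra.
    assert (0 <= 9 / 32 * s ^ 2 * (2 * R0 * (R0 + r))) by nra.
    lra.
  - assert (Hx1 : 1 < x) by nra.
    assert (Hx54 : x <= 5 / 4) by nra.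
    assert (Hrs : r < s * R0) by nra.
    assert (r ^ 2 <= s ^ 2 * R0 ^ 2) by nra.
    assert (0 <= x ^ 2 - 1 <= 9 / 16) by nra.
    assert (r ^ 2 * (x ^ 2 - 1) <= s ^ 2 * R0 ^ 2 * (9 / 16)) by nra.
    assert (R0 ^ 2 <= R0 * (R0 + r)) by nra.
    nra.
Qed.

Lemma sweep_margin_pos (s : R) :
  0 <= s <= PI / 2 -> 0 < 1 - cos s - evader_excess r R0 a s.
Proof.
  intros Hs.
  destruct (Req_dec s 0) as [-> | Hs0].
  - rewrite cos_0. pose proof evader_excess_0_neg. lra.
  - pose proof PI_RGT_0.
    pose proof (one_sub_cos_ge s ltac:(lra)).
    pose proof (evader_excess_le s Hs).
    assert (0 < s ^ 2) by (apply pow_lt; lra).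
    lra.
Qed.

End Margin.

Lemma fsweep_Vc_eq (r VT R0 t : R) : 0 < r -> 0 < VT -> r <= R0 ->
  fsweep r VT R0 t (Vc r VT R0) =
  1 - cos (Vc r VT R0 * t / R0) - evader_excess r R0 (asin (r / R0)) (Vc r VT R0 * t / R0).
Proof.
  intros Hr HVT HR0.
  pose proof PI_RGT_0.
  pose proof (asin_bound (r / R0)).
  unfold fsweep, evader_excess, Vc.
  field; repeat split; lra.
Qed.

Lemma Vc_pos (r VT R0 : R) : 0 < r -> 0 < VT -> r <= R0 -> 0 < Vc r VT R0.
Proof.
  intros Hr HVT HR0.
  pose proof PI_RGT_0.
  pose proof (asin_bound (r / R0)).
  unfold Vc.
  apply Rdiv_lt_0_compat; [| exact Hr].
  repeat apply Rmult_lt_0_compat; lra.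
Qed.

Lemma scaled_time_bound (V R0 t : R) : 0 < V -> 0 < R0 ->
  0 <= t <= PI * R0 / (2 * V) -> 0 <= V * t / R0 <= PI / 2.
Proof.
  intros HV HR0 [Ht0 Ht].
  assert (HVR0 : 0 < V / R0) by (apply Rdiv_lt_0_compat; lra).
  replace (V * t / R0) with (V / R0 * t) by (field; lra).
  replace (PI / 2) with (V / R0 * (PI * R0 / (2 * V))) by (field; lra).
  split; [apply Rmult_le_pos | apply Rmult_le_compat_l]; lra.
Qed.

Theorem theorem5 (r VT R0 : R) (hr : 0 < r) (hVT : 0 < VT) (hR0 : r <= R0) :
  (exists tstar : R,
      0 <= tstar <= PI * R0 / (2 * Vc r VT R0) /\
      (forall t : R, 0 <= t <= PI * R0 / (2 * Vc r VT R0) ->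
         fsweep r VT R0 tstar (Vc r VT R0) <= fsweep r VT R0 t (Vc r VT R0)) /\
      0 < fsweep r VT R0 tstar (Vc r VT R0)) /\
  (forall t : R, 0 <= t <= PI * R0 / (2 * Vc r VT R0) ->
     0 <= fsweep r VT R0 t (Vc r VT R0)).
Proof.
  pose proof PI_RGT_0.
  pose proof (Vc_pos r VT R0 hr hVT hR0) as HVc.
  pose proof (lt_asin_div_mul r R0 (conj hr hR0)) as Hra.
  assert (Ha : 0 < asin (r / R0)) by nra.
  assert (Hpos : forall t, 0 <= t <= PI * R0 / (2 * Vc r VT R0) ->
                   0 < fsweep r VT R0 t (Vc r VT R0)).
  { intros t Ht.
    rewrite fsweep_Vc_eq by assumption.
    apply sweep_margin_pos; [assumption .. |].
    apply scaled_time_bound; lra. }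
  split.
  - apply continuous_pos_attains_pos_min; [| | exact Hpos].
    + left; apply Rdiv_lt_0_compat; nra.
    + intros t _. unfold fsweep. reg.
  - intros t Ht. left. now apply Hpos.
Qed.
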